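(* Let $Q$ be a quantale, $M$ a shrinkable $Q$-module, and $\mathcal{F},\mathcal{G}\in\operatorname{mF}(Q)$ such that $\mathcal{F}+\mathcal{G}$ is 1-step over $M$. Then: (a) if there exists $\mathcal{H}\in\operatorname{mF}(Q)$ localizable over $M$ with $\mathcal{F}\cap\mathcal{G}\subseteq\mathcal{H}\subseteq\mathcal{F}$, then $\mathcal{F}$ is localizable over $M$; (b) if $sm=m$ for all $s\in\mathcal{F}\cap\mathcal{G}$ and $m\in M$, then both $\mathcal{F}$ and $\mathcal{G}$ are 1-step over $M$.
   Context: A quantale is a poset $Q$ in which every nonempty subset has a join $\sum$ (binary join $a+b$; no bottom required), with top $1$ and a commutative associative multiplication with unit $1$ distributing over nonempty joins. A $Q$-module is a poset $M$ with all nonempty joins and an associative unital action $Q\times M\to M$ distributing over nonempty joins in each variable. A multiplicative filter (m-filter) is a subset of $Q$ containing $1$, upward closed and closed under multiplication; $\operatorname{mF}(Q)$ is the set of them; $\mathcal{F}+\mathcal{G}$ is the smallest m-filter containing $\mathcal{F}\cup\mathcal{G}$. For $x,x_i$ write $x\le^*\sum_{i\in I}x_i$ if $x\le\sum_{i\in I_0}x_i$ for a finite nonempty $I_0\subseteq I$. $M$ is shrinkable if whenever $x\le\sum_ix_i$ there is a family $(y_j)$ with $x=\sum_jy_j$ and each $y_j\le^*\sum_ix_i$. For $a,b\in M$: $a\preceq^1_\mathcal{F}b$ means there are families $(a_i)$ in $M$, $(s_i)$ in $\mathcal{F}$ with $a\le\sum_ia_i$, $s_ia_i\le b$; $a\preceq^n_\mathcal{F}b$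 means a chain of $n$ such steps through elements of $M$; $a\preceq_\mathcal{F}b$ means $a\preceq^n_\mathcal{F}b$ for some $n\ge1$. $\mathcal{F}$ is localizable over $M$ if for each $b\in M$ there is $n_b\in\mathbb{N}$ with $a\preceq_\mathcal{F}b\Rightarrow a\preceq^{n_b}_\mathcal{F}b$ for all $a$; $\mathcal{F}$ is 1-step over $M$ if it is localizable over $M$ and $a\preceq_\mathcal{F}b$ implies $a\preceq^1_\mathcal{F}b$. *)

From Stdlib Require Import List.
Set Implicit Arguments.

Record Quantale := {
  qcar :> Type;
  qle : qcar -> qcar -> Prop;
  qle_refl : forall x, qle x x;
  qle_trans : forall x y z, qle x y -> qle y z -> qle x z;
  qle_antisym : forall x y, qle x y -> qle y x -> x = y;
  (* join of a subset; meaningful only for nonempty subsets *)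
  qsup : (qcar -> Prop) -> qcar;
  qsup_ub : forall (S : qcar -> Prop) x, S x -> qle x (qsup S);
  qsup_least : forall (S : qcar -> Prop) y, (exists x, S x) ->
      (forall x, S x -> qle x y) -> qle (qsup S) y;
  qone : qcar;
  qone_top : forall x, qle x qone;
  qmul : qcar -> qcar -> qcar;
  qmul_assoc : forall x y z, qmul x (qmul y z) = qmul (qmul x y) z;
  qmul_comm : forall x y, qmul x y = qmul y x;
  qmul_one : forall x, qmul qone x = x;
  qmul_sup : forall a (S : qcar -> Prop), (exists x, S x) ->
      qmul a (qsup S) = qsup (fun y => exists x, S x /\ y = qmul a x)
}.

Record QModule (Q : Quantale) := {
  mcar :> Type;
  mle : mcar -> mcar -> Prop;
  mle_refl : forall x, mle x x;
  mle_trans : forall x y z, mle x y -> mle y z -> mle x z;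
  mle_antisym : forall x y, mle x y -> mle y x -> x = y;
  msup : (mcar -> Prop) -> mcar;
  msup_ub : forall (S : mcar -> Prop) x, S x -> mle x (msup S);
  msup_least : forall (S : mcar -> Prop) y, (exists x, S x) ->
      (forall x, S x -> mle x y) -> mle (msup S) y;
  act : qcar Q -> mcar -> mcar;
  act_assoc : forall s t m, act s (act t m) = act (qmul Q s t) m;
  act_one : forall m, act (qone Q) m = m;
  act_supl : forall (S : qcar Q -> Prop) m, (exists s, S s) ->
      act (qsup Q S) m = msup (fun y => exists s, S s /\ y = act s m);
  act_supr : forall s (S : mcar -> Prop), (exists m, S m) ->
      act s (msup S) = msup (fun y => exists m, S m /\ y = act s m)
}.

Section Defs.
Variable Q : Quantale.
Variable M : QModule Q.

Definition fsup (I : Type) (x : I -> M) : M :=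
  msup M (fun y => exists i, x i = y).

Definition fsup_list (I : Type) (x : I -> M) (l : list I) : M :=
  msup M (fun y => exists i, In i l /\ x i = y).

Definition le_star (x : M) (I : Type) (xs : I -> M) : Prop :=
  exists l : list I, l <> nil /\ mle M x (fsup_list xs l).

(** shrinkable modules (families are nonempty, so that their joins exist) *)
Definition shrinkable : Prop :=
  forall (x : M) (I : Type) (xs : I -> M), inhabited I ->
    mle M x (fsup xs) ->
    exists (J : Type) (ys : J -> M), inhabited J /\ x = fsup ys /\
      forall j, le_star (ys j) xs.

Definition mfilter (F : Q -> Prop) : Prop :=
  F (qone Q) /\
  (forall x y, qle Q x y -> F x -> F y) /\
  (forall x y, F x -> F y -> F (qmul Q x y)).

Definition mfsum (F G : Q -> Prop) : Q -> Prop :=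
  fun q => forall H, mfilter H -> (forall x, F x -> H x) ->
                     (forall x, G x -> H x) -> H q.

Definition mfcap (F G : Q -> Prop) : Q -> Prop := fun q => F q /\ G q.

Definition prec1 (F : Q -> Prop) (a b : M) : Prop :=
  exists (I : Type) (as_ : I -> M) (s : I -> Q),
    inhabited I /\ (forall i, F (s i)) /\ mle M a (fsup as_) /\
    forall i, mle M (act M (s i) (as_ i)) b.

(** chain of n steps; precn F 0 a b is a = b (only n >= 1 is used) *)
Fixpoint precn (F : Q -> Prop) (n : nat) (a b : M) : Prop :=
  match n with
  | O => a = b
  | S k => exists c, prec1 F a c /\ precn F k c b
  end.

Definition prec (F : Q -> Prop) (a b : M) : Prop :=
  exists n, 1 <= n /\ precn F n a b.

Definition localizable (F : Q -> Prop) : Prop :=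
  forall b : M, exists nb, 1 <= nb /\ forall a, prec F a b -> precn F nb a b.

Definition one_step (F : Q -> Prop) : Prop :=
  localizable F /\ forall a b, prec F a b -> prec1 F a b.

End Defs.

Arguments mfilter {Q} F.
Arguments mfsum {Q} F G _.
Arguments mfcap {Q} F G _.

(* The m-filter F + G is {q | f g <= q for some f in F, g in G}.  Since F + G is
   1-step, an F-chain from a to b collapses to one (F+G)-step; by shrinkability its witnesses
   z lie below a and satisfy (f g) z <= b.  The join c of the elements f z then gives
   a <=^1_F c, c <= a (so c still F-reaches b) and c <=^1_G b.  A chain that is an X-chain
   and also a single Y-step is an (X /\ Y)-chain, so every F-chain factors as one F-step
   followed by an (F /\ G)-chain.  For (a) the latter is an H-chain of bounded length; for
   (b) it only goes downwards, as F /\ G acts trivially, and the factorization is a single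
   F-step. *)

From Stdlib Require Import List.

Set Implicit Arguments.
Unset Strict Implicit.

Section QuantaleOrder.
Variable Q : Quantale.

Definition qjoin (x y : Q) : Q := qsup Q (fun z => z = x \/ z = y).

Lemma qjoin_l x y : qle Q x (qjoin x y).
Proof. apply qsup_ub; auto. Qed.

Lemma qjoin_r x y : qle Q y (qjoin x y).
Proof. apply qsup_ub; auto. Qed.

Lemma qjoin_idPr x y : qle Q x y -> qjoin x y = y.
Proof.
  intros hxy. apply qle_antisym; [|apply qjoin_r].
  apply qsup_least; [exists x; auto|]. intros z [-> | ->]; auto using qle_refl.
Qed.

Lemma qmul_monotone a x y : qle Q x y -> qle Q (qmul Q a x) (qmul Q a y).
Proof.
  intros hxy. rewrite <- (qjoin_idPr hxy). unfold qjoin.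
  rewrite qmul_sup by (exists x; auto).
  apply qsup_ub. exists x; auto.
Qed.

Lemma qmul_le_l a b : qle Q (qmul Q a b) a.
Proof.
  eapply qle_trans; [apply (qmul_monotone a (qone_top Q b))|].
  rewrite qmul_comm, qmul_one. apply qle_refl.
Qed.

Lemma qmul_le_r a b : qle Q (qmul Q a b) b.
Proof. rewrite qmul_comm. apply qmul_le_l. Qed.

End QuantaleOrder.

Section ModuleOrder.
Variable Q : Quantale.
Variable M : QModule Q.

Definition mjoin (x y : M) : M := msup M (fun z => z = x \/ z = y).

Lemma mjoin_l x y : mle M x (mjoin x y).
Proof. apply msup_ub; auto. Qed.

Lemma mjoin_r x y : mle M y (mjoin x y).
Proof. apply msup_ub; auto. Qed.

Lemma mjoin_least x y z : mle M x z -> mle M y z -> mle M (mjoin x y) z.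
Proof. intros hx hy. apply msup_least; [exists x; auto|]. intros w [-> | ->]; auto. Qed.

Lemma act_monotone_r s x y : mle M x y -> mle M (act M s x) (act M s y).
Proof.
  intros hxy.
  assert (hjoin : mjoin x y = y)
    by (apply mle_antisym; [apply mjoin_least; auto using mle_refl|apply mjoin_r]).
  rewrite <- hjoin. unfold mjoin. rewrite act_supr by (exists x; auto).
  apply msup_ub. exists x; auto.
Qed.

Lemma act_monotone_l s t x : qle Q s t -> mle M (act M s x) (act M t x).
Proof.
  intros hst. rewrite <- (qjoin_idPr hst). unfold qjoin.
  rewrite act_supl by (exists s; auto).
  apply msup_ub. exists s; auto.
Qed.

Lemma act_le s x : mle M (act M s x) x.
Proof.
  eapply mle_trans; [apply (act_monotone_l x (qone_top Q s))|].
  rewrite act_one. apply mle_refl.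
Qed.

End ModuleOrder.

Section Precedence.
Variable Q : Quantale.
Variable M : QModule Q.
Implicit Types (X Y : Q -> Prop) (a b c : M).

Definition moves_below X b (z : M) : Prop := exists t, X t /\ mle M (act M t z) b.

Lemma moves_below_refl X b : X (qone Q) -> moves_below X b b.
Proof. intros h1. exists (qone Q). split; auto. rewrite act_one. apply mle_refl. Qed.

Lemma prec1E X a b : X (qone Q) -> prec1 M X a b <-> mle M a (msup M (moves_below X b)).
Proof.
  intros h1. split.
  - intros [I [as_ [s [[i0] [hs [ha hb]]]]]].
    eapply mle_trans; [apply ha|]. apply msup_least; [exists (as_ i0), i0; auto|].
    intros x [i <-]. apply msup_ub. exists (s i); auto.
  - intros ha.
    exists {p : M * Q | X (snd p) /\ mle M (act M (snd p) (fst p)) b}.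
    exists (fun p => fst (proj1_sig p)), (fun p => snd (proj1_sig p)).
    split; [|split; [|split]].
    + constructor. exists (b, qone Q). split; auto. rewrite act_one. apply mle_refl.
    + intros [[z t] [ht hz]]; exact ht.
    + eapply mle_trans; [apply ha|]. apply msup_least; [exists b; apply moves_below_refl; auto|].
      intros z [t [ht hz]]. apply msup_ub. exists (exist _ (z, t) (conj ht hz)). reflexivity.
    + intros [[z t] [ht hz]]; exact hz.
Qed.

Lemma prec1_le_l X a a' b : X (qone Q) -> mle M a a' -> prec1 M X a' b -> prec1 M X a b.
Proof. intros h1 ha. rewrite !prec1E by auto. apply mle_trans; auto. Qed.

Lemma prec1_le_r X a b b' : X (qone Q) -> mle M b b' -> prec1 M X a b -> prec1 M X a b'.
Proof.
  intros h1 hb. rewrite !prec1E by auto. intros ha. eapply mle_trans; [apply ha|].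
  apply msup_least; [exists b; apply moves_below_refl; auto|].
  intros z [t [ht hz]]. apply msup_ub. exists t. split; auto. eapply mle_trans; eauto.
Qed.

Lemma prec1_sub X Y a b : (forall q, X q -> Y q) -> prec1 M X a b -> prec1 M Y a b.
Proof. intros hXY [I [as_ [s [hI [hs habs]]]]]. exists I, as_, s; auto. Qed.

Lemma precn_sub X Y n a b : (forall q, X q -> Y q) -> precn M X n a b -> precn M Y n a b.
Proof.
  intros hXY. revert a. induction n as [|n IH]; simpl; auto.
  intros a [c [hac hcb]]. exists c. split; eauto using prec1_sub.
Qed.

Lemma prec_sub X Y a b : (forall q, X q -> Y q) -> prec M X a b -> prec M Y a b.
Proof. intros hXY [n [hn hab]]. exists n. split; auto. eapply precn_sub; eauto. Qed.

Lemma precn_le_l X n a a' b :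
  X (qone Q) -> mle M a a' -> precn M X (S n) a' b -> precn M X (S n) a b.
Proof. intros h1 ha [c [hac hcb]]. exists c. split; auto. eapply prec1_le_l; eauto. Qed.

Lemma prec_le_l X a a' b : X (qone Q) -> mle M a a' -> prec M X a' b -> prec M X a b.
Proof.
  intros h1 ha [[|n] [hn hab]]; [inversion hn|].
  exists (S n). split; auto. eapply precn_le_l; eauto.
Qed.

Lemma prec1_refl X b : X (qone Q) -> prec1 M X b b.
Proof. intros h1. apply prec1E; auto. apply msup_ub, moves_below_refl; auto. Qed.

Lemma precn_refl X n b : X (qone Q) -> precn M X (S n) b b.
Proof.
  intros h1. induction n as [|n IH]; exists b; split; auto using prec1_refl. reflexivity.
Qed.

Lemma prec1_mjoin X a1 a2 b :
  X (qone Q) -> prec1 M X a1 b -> prec1 M X a2 b -> prec1 M X (mjoin a1 a2) b.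
Proof. intros h1. rewrite !prec1E by auto. apply mjoin_least. Qed.

Lemma precn_mjoin X n a1 a2 b : X (qone Q) ->
  precn M X (S n) a1 b -> precn M X (S n) a2 b -> precn M X (S n) (mjoin a1 a2) b.
Proof.
  intros h1. revert a1 a2. induction n as [|n IH]; intros a1 a2 [c1 [h1c h1b]] [c2 [h2c h2b]].
  - simpl in h1b, h2b. subst c1 c2. exists b. split; [apply prec1_mjoin; auto|reflexivity].
  - exists (mjoin c1 c2). split; [|apply IH; auto].
    apply prec1_mjoin; auto.
    + eapply prec1_le_r; [auto|apply mjoin_l|exact h1c].
    + eapply prec1_le_r; [auto|apply mjoin_r|exact h2c].
Qed.

End Precedence.

Arguments moves_below {Q} M X b z.

Section Shrinking.
Variable Q : Quantale.
Variable M : QModule Q.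
Hypothesis shrinkM : shrinkable M.
Implicit Types (X Y : Q -> Prop) (a b y : M).

Lemma common_multiplier X b (I : Type) (xs : I -> M) (l : list I) : mfilter X ->
  (forall i, In i l -> moves_below M X b (xs i)) ->
  exists t, X t /\ forall i, In i l -> mle M (act M t (xs i)) b.
Proof.
  intros [h1 [_ hmul]]. induction l as [|i l IH]; intros hl.
  - exists (qone Q). split; auto. intros i [].
  - destruct IH as [t [ht htl]]; [intros j hj; apply hl; right; exact hj|].
    destruct (hl i (or_introl eq_refl)) as [ti [hti hi]].
    exists (qmul Q ti t). split; auto. intros j [<- | hj].
    + eapply mle_trans; [apply act_monotone_l, qmul_le_l|exact hi].
    + eapply mle_trans; [apply act_monotone_l, qmul_le_r|exact (htl j hj)].
Qed.

Lemma moves_below_fsup_list X b (I : Type) (xs : I -> M) (l : list I) : mfilter X ->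
  l <> nil -> (forall i, In i l -> moves_below M X b (xs i)) ->
  moves_below M X b (fsup_list M xs l).
Proof.
  intros hX hl hxs. destruct (common_multiplier hX hxs) as [t [ht htl]].
  destruct l as [|i0 l]; [congruence|].
  exists t. split; auto. unfold fsup_list.
  rewrite act_supr by (exists (xs i0), i0; split; [left|]; reflexivity).
  apply msup_least.
  - exists (act M t (xs i0)), (xs i0). split; auto. exists i0. split; [left|]; reflexivity.
  - intros w [m [[i [hi <-]] ->]]. auto.
Qed.

(* Shrinkability makes the witnesses of [y <=^1_X b] lie below [y] itself. *)
Lemma prec1_shrink X y b : mfilter X -> prec1 M X y b ->
  (exists z, mle M z y /\ moves_below M X b z) /\
  mle M y (msup M (fun z => mle M z y /\ moves_below M X b z)).
Proof.
  intros hX hyb. pose proof hX as [h1 _].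
  apply prec1E in hyb; auto.
  set (xs := fun i : {z : M | moves_below M X b z} => proj1_sig i).
  assert (hy : mle M y (fsup M xs)).
  { eapply mle_trans; [exact hyb|].
    apply msup_least; [exists b; apply moves_below_refl; auto|].
    intros z hz. apply msup_ub. exists (exist _ z hz). reflexivity. }
  assert (hinh : inhabited {z : M | moves_below M X b z})
    by (constructor; exists b; apply moves_below_refl; auto).
  destruct (shrinkM hinh hy) as [J [ys [[j0] [hys hstar]]]].
  assert (hys_le : forall j, mle M (ys j) y)
    by (intros j; rewrite hys; apply msup_ub; exists j; reflexivity).
  assert (hys_mb : forall j, moves_below M X b (ys j)).
  { intros j. destruct (hstar j) as [l [hl hle]].
    destruct (moves_below_fsup_list hX hl (xs := xs) (b := b)) as [t [ht htl]].
    { intros [z hz] _. exact hz. }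
    exists t. split; auto. eapply mle_trans; [apply act_monotone_r, hle|exact htl]. }
  split; [exists (ys j0); auto|].
  rewrite hys at 1. apply msup_least; [exists (ys j0), j0; reflexivity|].
  intros x [j <-]. apply msup_ub. auto.
Qed.

Lemma prec1_cap X Y a b : mfilter X -> mfilter Y ->
  prec1 M X a b -> prec1 M Y a b -> prec1 M (mfcap X Y) a b.
Proof.
  intros hX hY haX haY. pose proof hX as [hX1 [hXup _]]. pose proof hY as [hY1 [hYup _]].
  apply prec1E; [split; auto|].
  destruct (prec1_shrink hX haX) as [hne ha]. eapply mle_trans; [exact ha|].
  apply msup_least; [exact hne|].
  intros z [hza [t [ht htz]]].
  destruct (prec1_shrink hY (prec1_le_l hY1 hza haY)) as [hne' hz].
  eapply mle_trans; [exact hz|]. apply msup_least; [exact hne'|].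
  intros w [hwz [u [hu huw]]]. apply msup_ub.
  exists (qjoin t u). split.
  { split; [exact (hXup _ _ (qjoin_l t u) ht)|exact (hYup _ _ (qjoin_r t u) hu)]. }
  unfold qjoin. rewrite act_supl by (exists t; auto).
  apply msup_least; [exists (act M t w), t; auto|].
  intros v [s [[-> | ->] ->]]; auto.
  eapply mle_trans; [apply act_monotone_r, hwz|exact htz].
Qed.

(* The first intermediate point [d] is replaced by the join [d'] of all elements below
   both [y] and [d]: [d'] is still reached from [y] by [X], and reaches [b] by [Y]. *)
Lemma precn_cap X Y n y b : mfilter X -> mfilter Y ->
  precn M X (S n) y b -> prec1 M Y y b -> precn M (mfcap X Y) (S n) y b.
Proof.
  intros hX hY. pose proof hX as [hX1 _]. pose proof hY as [hY1 _].
  assert (hXY1 : mfcap X Y (qone Q)) by (split; auto).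
  revert y. induction n as [|n IH]; intros y [d [hyd hdb]] hyb.
  - simpl in hdb. subst d. exists b. split; [apply prec1_cap; auto|reflexivity].
  - destruct (prec1_shrink hX hyd) as [[z0 [hz0y [t0 [ht0 hz0d]]]] hy].
    set (d' := msup M (fun w => mle M w y /\ mle M w d)).
    assert (hne : exists w, mle M w y /\ mle M w d)
      by (exists (act M t0 z0); split; [eapply mle_trans; [apply act_le|]|]; auto).
    assert (hd'd : mle M d' d) by (apply msup_least; [exact hne|]; intros w [_ hw]; exact hw).
    assert (hd'y : mle M d' y) by (apply msup_least; [exact hne|]; intros w [hw _]; exact hw).
    assert (hyd' : prec1 M X y d').
    { apply prec1E; auto. eapply mle_trans; [exact hy|].
      apply msup_least; [exists z0; split; [|exists t0]; auto|].
      intros z [hzy [t [ht htz]]]. apply msup_ub. exists t. split; auto.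
      apply msup_ub. split; auto. eapply mle_trans; [apply act_le|exact hzy]. }
    assert (hd'b : precn M (mfcap X Y) (S n) d' b)
      by (apply IH; [exact (precn_le_l hX1 hd'd hdb)|exact (prec1_le_l hY1 hd'y hyb)]).
    exists (mjoin d' b). split.
    + apply prec1_cap; auto.
      * exact (prec1_le_r hX1 (mjoin_l d' b) hyd').
      * exact (prec1_le_r hY1 (mjoin_r d' b) hyb).
    + apply precn_mjoin; auto using precn_refl.
Qed.

End Shrinking.

Section FilterSum.
Variable Q : Quantale.
Implicit Types (F G : Q -> Prop) (q : Q).

Definition mfprod F G q : Prop := exists f g, F f /\ G g /\ qle Q (qmul Q f g) q.

Lemma mfilter_mfprod F G : mfilter F -> mfilter G -> mfilter (mfprod F G).
Proof.
  intros [hF1 [_ hFmul]] [hG1 [_ hGmul]]. split; [|split].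
  - exists (qone Q), (qone Q). repeat split; auto. apply qone_top.
  - intros x y hxy [f [g [hf [hg hfg]]]]. exists f, g. repeat split; auto.
    eapply qle_trans; eauto.
  - intros x y [f [g [hf [hg hfg]]]] [f' [g' [hf' [hg' hfg']]]].
    exists (qmul Q f f'), (qmul Q g g'). repeat split; auto.
    replace (qmul Q (qmul Q f f') (qmul Q g g')) with (qmul Q (qmul Q f g) (qmul Q f' g')).
    2:{ rewrite !qmul_assoc. f_equal. rewrite <- !qmul_assoc. f_equal. apply qmul_comm. }
    eapply qle_trans; [apply qmul_monotone, hfg'|].
    rewrite (qmul_comm Q (qmul Q f g)), (qmul_comm Q x). apply qmul_monotone, hfg.
Qed.

Lemma mfsum_l F G q : F q -> mfsum F G q.
Proof. intros hq H _ hFH _. auto. Qed.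

Lemma mfsumC F G q : mfsum F G q -> mfsum G F q.
Proof. intros hq H hH hGH hFH. apply hq; auto. Qed.

Lemma mfsum_mfprod F G q : mfilter F -> mfilter G -> mfsum F G q -> mfprod F G q.
Proof.
  intros hF hG hq. pose proof hF as [hF1 _]. pose proof hG as [hG1 _].
  apply hq; [apply mfilter_mfprod; auto| |].
  - intros x hx. exists x, (qone Q). repeat split; auto.
    rewrite qmul_comm, qmul_one. apply qle_refl.
  - intros x hx. exists (qone Q), x. repeat split; auto.
    rewrite qmul_one. apply qle_refl.
Qed.

End FilterSum.

Section Factorization.
Variable Q : Quantale.
Variable M : QModule Q.
Hypothesis shrinkM : shrinkable M.
Implicit Types (F G X : Q -> Prop) (a b c : M).

(* The witness [c] collects the [f z] for which some [fg] with [f] in [F], [g] in [G]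
   sends [z] below [b]: then [g] sends [f z] below [b], and [c <= a]. *)
Lemma prec_factor F G a b : mfilter F -> mfilter G ->
  prec M F a b -> prec1 M (mfsum F G) a b ->
  exists c, prec1 M F a c /\ prec M (mfcap F G) c b.
Proof.
  intros hF hG hab habFG. pose proof hF as [hF1 _]. pose proof hG as [hG1 _].
  assert (habD : prec1 M (mfprod F G) a b)
    by (eapply prec1_sub; [intros q; apply mfsum_mfprod; auto|exact habFG]).
  destruct (prec1_shrink shrinkM (mfilter_mfprod hF hG) habD)
    as [[z0 [hz0 [q0 [[f0 [g0 [hf0 [hg0 hfg0]]]] hq0]]]] ha].
  set (witness := fun w => exists z f g, mle M z a /\ F f /\ G g /\
                    mle M (act M (qmul Q f g) z) b /\ w = act M f z).
  assert (hne : exists w, witness w).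
  { exists (act M f0 z0), z0, f0, g0. repeat split; auto.
    eapply mle_trans; [apply act_monotone_l, hfg0|exact hq0]. }
  exists (msup M witness). split.
  - apply prec1E; auto. eapply mle_trans; [exact ha|].
    apply msup_least; [exists z0; split; [|exists q0; split; [exists f0, g0|]]; auto|].
    intros z [hz [q [[f [g [hf [hg hfg]]]] hq]]]. apply msup_ub.
    exists f. split; auto. apply msup_ub. exists z, f, g. repeat split; auto.
    eapply mle_trans; [apply act_monotone_l, hfg|exact hq].
  - assert (hca : mle M (msup M witness) a).
    { apply msup_least; [exact hne|]. intros w [z [f [g [hz [_ [_ [_ ->]]]]]]].
      eapply mle_trans; [apply act_le|exact hz]. }
    destruct (prec_le_l hF1 hca hab) as [[|n] [hn hcb]]; [inversion hn|].
    exists (S n). split; auto. apply precn_cap; auto.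
    apply prec1E; auto. apply msup_least; [exact hne|].
    intros w [z [f [g [hz [hf [hg [hfgz ->]]]]]]]. apply msup_ub.
    exists g. split; auto. rewrite act_assoc, qmul_comm. exact hfgz.
Qed.

Lemma prec_le_of_act_trivial X a b : X (qone Q) ->
  (forall s m, X s -> act M s m = m) -> prec M X a b -> mle M a b.
Proof.
  intros h1 htriv.
  assert (hstep : forall a b, prec1 M X a b -> mle M a b).
  { intros a' b' hab. apply prec1E in hab; auto. eapply mle_trans; [exact hab|].
    apply msup_least; [exists b'; apply moves_below_refl; auto|].
    intros z [t [ht hz]]. rewrite htriv in hz; auto. }
  intros [n [_ hab]]. revert a hab. induction n as [|n IH]; intros a hab.
  - rewrite hab. apply mle_refl.
  - destruct hab as [c [hac hcb]]. eapply mle_trans; [apply hstep, hac|apply IH, hcb].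
Qed.

Lemma localizable_of_factor X Y H : X (qone Q) -> localizable M H ->
  (forall q, Y q -> H q) -> (forall q, H q -> X q) ->
  (forall a b, prec M X a b -> exists c, prec1 M X a c /\ prec M Y c b) ->
  localizable M X.
Proof.
  intros hX1 hH hYH hHX hfactor b. destruct (hH b) as [nb [hnb hnbH]].
  exists (S nb). split; auto. intros a hab.
  destruct (hfactor a b hab) as [c [hac hcb]]. exists c. split; auto.
  apply (precn_sub hHX), hnbH, (prec_sub hYH), hcb.
Qed.

Lemma one_step_of_factor X Y : X (qone Q) -> Y (qone Q) ->
  (forall s m, Y s -> act M s m = m) ->
  (forall a b, prec M X a b -> exists c, prec1 M X a c /\ prec M Y c b) ->
  one_step M X.
Proof.
  intros hX1 hY1 htriv hfactor.
  assert (hprec1 : forall a b, prec M X a b -> prec1 M X a b).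
  { intros a b hab. destruct (hfactor a b hab) as [c [hac hcb]].
    exact (prec1_le_r hX1 (prec_le_of_act_trivial hY1 htriv hcb) hac). }
  split; auto. intros b. exists 1. split; auto.
  intros a hab. exists b. split; auto. reflexivity.
Qed.

End Factorization.

Theorem mainTheorem6 (Q : Quantale) (M : QModule Q) (F G : Q -> Prop) :
  shrinkable M -> mfilter F -> mfilter G -> one_step M (mfsum F G) ->
  ((exists H : Q -> Prop, mfilter H /\ localizable M H /\
      (forall q, mfcap F G q -> H q) /\ (forall q, H q -> F q)) ->
     localizable M F)
  /\
  ((forall (s : Q) (m : M), mfcap F G s -> act M s m = m) ->
     one_step M F /\ one_step M G).
Proof.
  intros shrinkM hF hG [_ hsum1]. pose proof hF as [hF1 _]. pose proof hG as [hG1 _].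
  assert (factorF : forall a b, prec M F a b ->
            exists c, prec1 M F a c /\ prec M (mfcap F G) c b).
  { intros a b hab. apply prec_factor; auto.
    apply hsum1. eapply prec_sub; [intros q; apply mfsum_l|exact hab]. }
  assert (factorG : forall a b, prec M G a b ->
            exists c, prec1 M G a c /\ prec M (mfcap G F) c b).
  { intros a b hab. apply prec_factor; auto.
    eapply prec1_sub; [intros q; apply mfsumC|]. apply hsum1.
    eapply prec_sub; [intros q hq; apply mfsumC, mfsum_l, hq|exact hab]. }
  split.
  - intros [H [_ [hH [hcapH hHF]]]]. exact (localizable_of_factor hF1 hH hcapH hHF factorF).
  - intros htriv. split.
    + exact (one_step_of_factor (Y := mfcap F G) hF1 (conj hF1 hG1) htriv factorF).
    + apply (one_step_of_factor (Y := mfcap G F) hG1 (conj hG1 hF1)); auto.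
      intros s m [hsG hsF]. apply htriv. split; auto.
Qed.
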